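(* Let $\mathcal{N}$ be an acyclic, deterministic, sound negotiation, and let $m,n$ be two nodes of $\mathcal{N}$. Then $m\parallel n$ if and only if every run $w$ from $C_{\mathit{init}}$ containing both $m$ and $n$ has an equivalent run $w'=w_1w_2$ with $C_{\mathit{init}}\xrightarrow{w_1}C\xrightarrow{w_2}C'$ for some configuration $C$ in which both $m$ and $n$ are enabled.
   Context: A negotiation is a tuple $\mathcal{N}=(\mathit{Proc},N,\mathit{dom},R,\delta)$ where $\mathit{Proc}$ is a finite set of processes, $N$ is a finite set of nodes, $\mathit{dom}:N\to 2^{\mathit{Proc}}\setminus\{\emptyset\}$, there are two distinguished nodes $n_{\mathit{init}},n_{\mathit{fin}}$ with $\mathit{dom}(n_{\mathit{init}})=\mathit{dom}(n_{\mathit{fin}})=\mathit{Proc}$, $R$ is a set of results, each node $n$ has a set $\mathit{out}(n)\subseteq R$ of results (nonempty for $n\neq n_{\mathit{fin}}$), and $\delta(n,a,p)\subseteq N$ is defined and nonempty exactly when $a\in\mathit{out}(n)$ and $p\in\mathit{dom}(n)$, with $p\in\mathit{dom}(n')$ for all $n'\in\delta(n,a,p)$. $\mathcal{N}$ is deterministic if every $\delta(n,a,p)$ is a singleton. A configuration is a map $C$ assigning to each process a nonempty set of nodes; $C_{\mathit{init}}(p)=\{n_{\mathit{init}}\}$, $C_{\mathit{fin}}(p)=\{n_{\mathit{fin}}\}$. A node $n$ is enabled in $C$ if $n\in C(p)$ for all $p\in\mathit{dom}(n)$. If $n$ is enabled and $a\in\mathit{out}(n)$ then $C\xrightarrow{(n,a)}C'$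 with $C'(p)=\delta(n,a,p)$ for $p\in\mathit{dom}(n)$, $C'(p)=C(p)$ otherwise. A run is a sequence $(n_1,a_1)(n_2,a_2)\cdots$ of such steps, and it contains a node $n$ if $n=n_i$ for some $i$; a configuration is reachable if some finite run from $C_{\mathit{init}}$ leads to it; $\mathcal{N}$ is sound if every finite run from $C_{\mathit{init}}$ can be extended to a finite run ending in $C_{\mathit{fin}}$. The graph of $\mathcal{N}$ has vertex set $N$ and edges $n\to n'$ whenever $n'\in\delta(n,a,p)$ for some $a,p$; $\mathcal{N}$ is acyclic if this graph is. Two runs are equivalent if one can be obtained from the other by repeatedly exchanging adjacent pairs $(m,a)(n,b)$ into $(n,b)(m,a)$ when $\mathit{dom}(m)\cap\mathit{dom}(n)=\emptyset$. Two nodes satisfy $m\parallel n$ (can be concurrently enabled) if $\mathit{dom}(m)\cap\mathit{dom}(n)=\emptyset$ and some reachable configuration enables both $m$ and $n$. *)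

From Stdlib Require Import Relation_Operators.
From mathcomp Require Import all_boot.

Set Implicit Arguments.
Unset Strict Implicit.
Unset Printing Implicit Defensive.

Record negotiation (Proc Node Res : finType) := Negotiation {
  dom   : Node -> {set Proc};
  n_init : Node;
  n_fin  : Node;
  out   : Node -> {set Res};
  delta : Node -> Res -> Proc -> {set Node}
}.

Section Negotiations.
Variables (Proc Node Res : finType) (N : negotiation Proc Node Res).

Definition wf_negotiation : Prop :=
  [/\ (forall n, dom N n != set0),
      dom N (n_init N) = [set: Proc] /\ dom N (n_fin N) = [set: Proc],
      out N (n_fin N) = set0,
      (forall n, n != n_fin N -> out N n != set0) &
      (forall n a p, a \in out N n -> p \in dom N n ->
         delta N n a p != set0 /\
         (forall n', n' \in delta N n a p -> p \in dom N n'))].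

Definition deterministic : Prop :=
  forall n a p, a \in out N n -> p \in dom N n ->
    exists n', delta N n a p = [set n'].

Definition config := {ffun Proc -> {set Node}}.

Definition C_init : config := [ffun _ => [set n_init N]].
Definition C_fin : config := [ffun _ => [set n_fin N]].

Definition enabled (C : config) (n : Node) : Prop :=
  forall p, p \in dom N n -> n \in C p.

Definition step (C : config) (na : Node * Res) (C' : config) : Prop :=
  let (n, a) := na in
  [/\ enabled C n, a \in out N n &
      forall p, C' p = if p \in dom N n then delta N n a p else C p].

Fixpoint run (C : config) (w : seq (Node * Res)) (C' : config) : Prop :=
  match w with
  | [::] => C = C'
  | x :: w' => exists C1, step C x C1 /\ run C1 w' C'
  end.

Definition reachable (C : config) : Prop := exists w, run C_init w C.

Definition contains (w : seq (Node * Res)) (n : Node) : Prop :=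
  n \in [seq x.1 | x <- w].

Definition sound : Prop :=
  forall w C, run C_init w C -> exists w', run C w' C_fin.

Definition edge (n n' : Node) : Prop :=
  exists a p, a \in out N n /\ p \in dom N n /\ n' \in delta N n a p.

Definition acyclic : Prop := forall n, ~ clos_trans Node edge n n.

Definition swap1 (w w' : seq (Node * Res)) : Prop :=
  exists u v m a n b,
    [disjoint dom N m & dom N n] /\
    w = u ++ (m, a) :: (n, b) :: v /\ w' = u ++ (n, b) :: (m, a) :: v.

Definition equiv_runs : seq (Node * Res) -> seq (Node * Res) -> Prop :=
  clos_refl_trans (seq (Node * Res)) swap1.

Definition concurrent (m n : Node) : Prop :=
  [disjoint dom N m & dom N n] /\
  exists C, reachable C /\ enabled C m /\ enabled C n.

End Negotiations.

From Stdlib Require Import Relation_Operators.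
From mathcomp Require Import all_boot.

Set Implicit Arguments.
Unset Strict Implicit.
Unset Printing Implicit Defensive.

(* If m || n, there is no path between m and n in the graph: firing n from a
   configuration enabling both leaves a process of m at m, and in a sound
   deterministic negotiation every edge out of a node held by a process is
   eventually taken, so following a path m ->+ n would place a process of n,
   whose nodes all lie strictly after n, back at n, contradicting acyclicity.
   Conversely, given a run u (m,a) v (n,b) z with no path m ->+ n, the steps of
   v split into those causally after (m,a) and the others; the latter commute
   before (m,a), and the former never touch the processes of n, so after
   u and the independent steps both m and n are enabled.  The reverse
   implication holds because reachable configurations of a deterministic
   negotiation map each process to a single node. *)

Lemma disjointP (T : finType) (A B : {pred T}) :
  reflect (forall x, x \in A -> x \in B -> False) [disjoint A & B].
Proof.
apply: (iffP pred0P) => [AB x xA xB | AB x /=].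
  by have := AB x; rewrite /= xA xB.
by apply/andP => -[]; apply: AB.
Qed.

Section Negotiation.
Variables (Proc Node Res : finType) (N : negotiation Proc Node Res).

Local Notation config := (config Proc Node).
Local Notation "x ~>+ y" := (clos_trans Node (edge N) x y) (at level 70).

Lemma run_cat C s t C' :
  run N C (s ++ t) C' <-> exists C1, run N C s C1 /\ run N C1 t C'.
Proof.
elim: s C => [|x s IH] C /=.
  by split; [move=> H; exists C | move=> [C1 [-> H]]].
split.
  by move=> [C1 [Hs /IH [C2 [H1 H2]]]]; exists C2; split=> //; exists C1.
by move=> [C2 [[C1 [Hs H1]] H2]]; exists C1; split=> //; apply/IH; exists C2.
Qed.

Lemma reachable_run C w C' : reachable N C -> run N C w C' -> reachable N C'.
Proof. by move=> [w0 H0] Hw; exists (w0 ++ w); apply/run_cat; exists C. Qed.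

Lemma step_enabled C n a :
  enabled N C n -> a \in out N n -> exists C', step N C (n, a) C'.
Proof.
move=> He Ha; exists [ffun p => if p \in dom N n then delta N n a p else C p].
by split=> // p; rewrite ffunE.
Qed.

Lemma step_swap C x a y b C2 :
  [disjoint dom N x & dom N y] ->
  (exists C1, step N C (x, a) C1 /\ step N C1 (y, b) C2) ->
  exists C1, step N C (y, b) C1 /\ step N C1 (x, a) C2.
Proof.
move=> Hd [C1 [[Hex Ha H1] [Hey Hb H2]]].
have Hey' : enabled N C y.
  by move=> p py; have := Hey p py; rewrite H1 (disjointFl Hd py).
have [C1' [_ _ H1']] := step_enabled Hey' Hb.
exists C1'; split=> //; split=> // [p px|p].
  by rewrite H1' (disjointFr Hd px); apply: Hex.
rewrite H2 H1 H1'; case: ifP => [py|//].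
by rewrite (disjointFl Hd py).
Qed.

Lemma run_equiv w w' C C' :
  equiv_runs N w w' -> run N C w C' -> run N C w' C'.
Proof.
elim=> {w w'} [w w' [u [v [x [a [y [b [Hd [-> ->]]]]]]]]|//|w1 w2 w3 _ IH1 _ IH2].
  move/run_cat=> [C1 [Hu /= [C2 [S1 [C3 [S2 Hv]]]]]].
  apply/run_cat; exists C1; split=> //.
  have [C2' [T1 T2]] := step_swap Hd (ex_intro _ C2 (conj S1 S2)).
  by exists C2'; split=> //; exists C3.
by move=> Hr; apply/IH2/IH1.
Qed.

Lemma equiv_runs_cat p s t q :
  equiv_runs N s t -> equiv_runs N (p ++ s ++ q) (p ++ t ++ q).
Proof.
elim=> [w w' [u [v [x [a [y [b [Hd [-> ->]]]]]]]]|w|w1 w2 w3 _ IH1 _ IH2].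
- by apply: rt_step; exists (p ++ u), (v ++ q), x, a, y, b; rewrite -!catA.
- exact: rt_refl.
- exact: rt_trans IH1 IH2.
Qed.

Lemma equiv_runs_move_front B x :
  {in B, forall y, [disjoint dom N y.1 & dom N x.1]} ->
  equiv_runs N (B ++ [:: x]) (x :: B).
Proof.
case: x => x a; elim: B => [|[y b] B IH] HB /=; first exact: rt_refl.
apply: (@rt_trans _ _ _ ((y, b) :: (x, a) :: B)).
  have := @equiv_runs_cat [:: (y, b)] (B ++ [:: (x, a)]) ((x, a) :: B) [::].
  by rewrite !cats0; apply; apply: IH => z zB; apply: HB; rewrite inE zB orbT.
apply: rt_step; exists [::], B, y, b, x, a; split=> //.
by apply: (HB (y, b)); rewrite inE eqxx.
Qed.

Lemma run_notin_dom s C C' p :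
  run N C s C' -> {in s, forall y, p \notin dom N y.1} -> C' p = C p.
Proof.
elim: s C => [|[x a] s IH] C /=; first by move=> ->.
move=> [C1 [[_ _ H1] Hr]] Hs.
rewrite (IH C1 Hr); last by move=> y ys; apply: Hs; rewrite inE ys orbT.
by rewrite H1 (negbTE (Hs (x, a) (mem_head _ _))).
Qed.

Lemma contains_split (w : seq (Node * Res)) x :
  contains w x -> exists u a r, w = u ++ (x, a) :: r.
Proof.
by case/mapP=> -[y a] /splitPr [u r] /= ->; exists u, a, r.
Qed.

Definition singleton_config (C : config) := forall p, exists x, C p = [set x].

Lemma reachable_singleton C :
  deterministic N -> reachable N C -> singleton_config C.
Proof.
move=> Hdet [w]; have : singleton_config (C_init N).
  by move=> p; exists (n_init N); rewrite ffunE.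
elim: w (C_init N) => [|[y a] w IH] C0 HC0 /=; first by move=> <-.
move=> [C1 [[_ Ha H] Hr]]; apply: IH Hr => p.
by rewrite H; case: ifP => // py; apply: Hdet.
Qed.

Lemma enabled_reachable_disjoint C m n :
  deterministic N -> reachable N C -> enabled N C m -> enabled N C n ->
  m != n -> [disjoint dom N m & dom N n].
Proof.
move=> Hdet HC Hm Hn Hmn; apply/disjointP => p pm pn.
have [x Ex] := reachable_singleton Hdet HC p.
by move: (Hm p pm) (Hn p pn) Hmn; rewrite Ex !inE => /eqP-> /eqP->; rewrite eqxx.
Qed.

Lemma disjoint_dom_neq_fin m n :
  wf_negotiation N -> [disjoint dom N m & dom N n] -> n != n_fin N.
Proof.
case=> Hne [_ Hfin] _ _ _ Hd; apply/eqP => En.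
have [p pm] := set0Pn _ (Hne m).
by move: (disjointFr Hd pm); rewrite En Hfin inE.
Qed.

Lemma run_first_fire v C C' q x :
  run N C v C' -> C q = [set x] -> C' q <> [set x] ->
  exists v1 C1, run N C v1 C1 /\ enabled N C1 x.
Proof.
elim: v C => [|[y a] v IH] C /=; first by move=> -> ->.
move=> [C1 [[He Ha H] Hr]] Hq Hq'.
case qy: (q \in dom N y).
  by exists [::], C; move: (He q qy); rewrite Hq inE => /eqP <-.
have [v1 [C2 [H1 H2]]] := IH C1 Hr ltac:(by rewrite H qy) Hq'.
by exists ((y, a) :: v1), C2; split=> //=; exists C1.
Qed.

Section Soundness.
Hypotheses (Hwf : wf_negotiation N) (Hdet : deterministic N) (Hsound : sound N).

(* Soundness forces a process parked at x to leave it, i.e. x to fire;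
   determinism makes the result of an edge x -> y move the process to y. *)
Lemma sound_follow_edge C q x y :
  reachable N C -> C q = [set x] -> edge N x y ->
  exists w C' q', [/\ run N C w C', C' q' = [set y] & q' \in dom N y].
Proof.
move=> [w0 Hw0] Hq [a [p [Ha [px yd]]]].
have [_ _ Hout_fin _ Hdelta] := Hwf.
have xfin : x != n_fin N by apply: contraTneq Ha => ->; rewrite Hout_fin inE.
have [v Hv] := Hsound Hw0.
have Hleave : C_fin N q <> [set x].
  by rewrite ffunE => /set1_inj Ex; rewrite Ex eqxx in xfin.
have [v1 [C1 [Hv1 He]]] := run_first_fire Hv Hq Hleave.
have [C2 Hs] := step_enabled He Ha.
exists (v1 ++ [:: (x, a)]), C2, p; split.
- by apply/run_cat; exists C1; split=> //=; exists C2.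
- have [y' Ey'] := Hdet Ha px.
  by case: Hs => _ _ ->; rewrite px Ey'; move: yd; rewrite Ey' inE => /eqP->.
- by have [_] := Hdelta x a p Ha px; apply.
Qed.

Lemma sound_follow_path x y C q :
  x ~>+ y -> reachable N C -> C q = [set x] ->
  exists w C' q', [/\ run N C w C', C' q' = [set y] & q' \in dom N y].
Proof.
move=> Hxy; elim: Hxy C q => {x y} [x y Hxy|x y z _ IH1 _ IH2] C q HC Hq.
  exact: sound_follow_edge HC Hq Hxy.
have [w1 [C1 [q1 [H1 Hq1 _]]]] := IH1 C q HC Hq.
have [w2 [C2 [q2 [H2 Hq2 Hz]]]] := IH2 C1 q1 (reachable_run HC H1) Hq1.
by exists (w1 ++ w2), C2, q2; split=> //; apply/run_cat; exists C1.
Qed.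

End Soundness.

Definition causally_after x (T : {set Proc}) (C : config) :=
  forall p, p \in T -> forall y, y \in C p -> x ~>+ y.

Lemma causally_after_fire x a C C' :
  step N C (x, a) C' -> causally_after x (dom N x) C'.
Proof.
by case=> _ Ha H p px y; rewrite H px => yd; apply: t_step; exists a, p.
Qed.

Lemma causally_after_extend x T C y b C' p :
  causally_after x T C -> step N C (y, b) C' ->
  p \in dom N y -> p \in T -> causally_after x (T :|: dom N y) C'.
Proof.
move=> HT [He Hb H] py pT.
have Hxy : x ~>+ y := HT p pT y (He p py).
move=> q; rewrite inE => /orP [qT|qy] z; rewrite H.
  case: ifP => [qy zd|_]; last exact: HT.
  by apply: t_trans Hxy (t_step _ _ _ _ _); exists b, q.
by rewrite qy => zd; apply: t_trans Hxy (t_step _ _ _ _ _); exists b, q.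
Qed.

Lemma causally_after_step x T C y b C' :
  causally_after x T C -> step N C (y, b) C' -> causally_after x T C'.
Proof.
move=> HT Hs q qT; case: (boolP (q \in dom N y)) => qy.
  by apply: (causally_after_extend HT Hs qy qT); rewrite inE qT.
by case: Hs => _ _ H z; rewrite H (negbTE qy); apply: HT.
Qed.

Lemma causally_after_run x T C w C' :
  causally_after x T C -> run N C w C' -> causally_after x T C'.
Proof.
elim: w C => [|[y b] w IH] C /=; first by move=> ? <-.
by move=> HT [C1 [Hs Hr]]; apply: IH Hr; apply: causally_after_step Hs.
Qed.

Lemma concurrent_sym m n : concurrent N m n -> concurrent N n m.
Proof.
by case=> Hd [C [HC [Hm Hn]]]; split; [rewrite disjoint_sym | exists C].
Qed.

Lemma concurrent_no_path m n :
  wf_negotiation N -> acyclic N -> deterministic N -> sound N ->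
  concurrent N m n -> ~ m ~>+ n.
Proof.
move=> Hwf Hacyc Hdet Hsound [Hd [C0 [HC0 [Hm Hn]]]] Hmn.
have [Hne _ _ Hout _] := Hwf.
have [pm pmd] := set0Pn _ (Hne m).
have [b bo] := set0Pn _ (Hout n (disjoint_dom_neq_fin Hwf Hd)).
have [C1 Hs] := step_enabled Hn bo.
have HC1 : reachable N C1.
  by apply: (reachable_run (w := [:: (n, b)]) HC0); exists C1.
have Hpm : C1 pm = [set m].
  have [z Ez] := reachable_singleton Hdet HC1 pm.
  have : m \in C1 pm by case: Hs => _ _ ->; rewrite (disjointFr Hd pmd); apply: Hm.
  by rewrite Ez inE => /eqP <-.
have [w [C2 [q [Hw Hq qn]]]] := sound_follow_path Hwf Hdet Hsound Hmn HC1 Hpm.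
apply: (Hacyc n); apply: (causally_after_run (causally_after_fire Hs) Hw qn).
by rewrite Hq inE.
Qed.

(* The steps of v that causally depend on (x, a) are collected in D and
   those that do not in I; T is the set of processes touched by (x, a) :: D. *)
Lemma equiv_runs_causal_split x a C1 v Ck :
  causally_after x (dom N x) C1 -> run N C1 v Ck ->
  exists I D (T : {set Proc}),
    [/\ equiv_runs N ((x, a) :: v) (I ++ (x, a) :: D),
        {in (x, a) :: D, forall y, dom N y.1 \subset T} &
        causally_after x T Ck].
Proof.
move=> H0; elim/last_ind: v Ck => [|v [y b] IH] Ck.
  move=> /= <-; exists [::], [::], (dom N x); split=> //; first exact: rt_refl.
  by move=> y; rewrite inE => /eqP->.
rewrite -cats1 => /run_cat [Cv [Hv /= [Ck' [Hs <-]]]].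
have [I [D [T [HE HDT HT]]]] := IH Cv Hv.
have HE1 : equiv_runs N ((x, a) :: v ++ [:: (y, b)])
                        (I ++ (x, a) :: D ++ [:: (y, b)]).
  have := @equiv_runs_cat [::] ((x, a) :: v) (I ++ (x, a) :: D) [:: (y, b)].
  by rewrite -catA; apply.
case: (pickP [pred p | (p \in dom N y) && (p \in T)]) => [p /andP [py pT] | Hno].
  exists I, (rcons D (y, b)), (T :|: dom N y); split.
  - by rewrite -cats1.
  - move=> z; rewrite -rcons_cons mem_rcons inE => /orP [/eqP-> | zD].
      exact: subsetUr.
    exact: subset_trans (HDT z zD) (subsetUl _ _).
  - exact: causally_after_extend HT Hs py pT.
have Hdis : [disjoint dom N y & T].
  by apply/disjointP => p py pT; have := Hno p; rewrite /= py pT.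
exists (rcons I (y, b)), D, T; split=> //.
- apply: rt_trans HE1 _; rewrite -cats1 -catA /=.
  have := @equiv_runs_cat I
    (((x, a) :: D) ++ [:: (y, b)]) ((y, b) :: (x, a) :: D) [::].
  rewrite !cats0; apply; apply: equiv_runs_move_front => z zD.
  by rewrite disjoint_sym; apply: disjointWr (HDT z zD) Hdis.
- by case: Hs => _ _ H q qT z; rewrite H (disjointFl Hdis qT); apply: HT.
Qed.

Definition enabling_cut m n C0 w C' : Prop :=
  exists w1 w2 C, equiv_runs N w (w1 ++ w2) /\
    run N C0 w1 C /\ run N C w2 C' /\ enabled N C m /\ enabled N C n.

Lemma enabling_cutC m n C0 w C' :
  enabling_cut m n C0 w C' -> enabling_cut n m C0 w C'.
Proof.
by case=> w1 [w2 [C [HE [H1 [H2 [Hm Hn]]]]]]; exists w1, w2, C.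
Qed.

Lemma enabling_cut_of_no_path C0 u m a v n b z C' :
  run N C0 (u ++ (m, a) :: v ++ (n, b) :: z) C' -> ~ m ~>+ n ->
  enabling_cut m n C0 (u ++ (m, a) :: v ++ (n, b) :: z) C'.
Proof.
move=> Hr Hmn.
move/run_cat: (Hr) => [Cu [_ /= [C1 [Hm /run_cat [Ck [Hv /= [Cn [Hn _]]]]]]]].
have [I [D [T [HE HDT HT]]]] :=
  equiv_runs_causal_split a (causally_after_fire Hm) Hv.
have Hdis : [disjoint dom N n & T].
  apply/disjointP => p pn pT; case: Hn => He _ _.
  exact: Hmn (HT p pT n (He p pn)).
have HE2 : equiv_runs N (u ++ (m, a) :: v ++ (n, b) :: z)
                        ((u ++ I) ++ ((m, a) :: D) ++ (n, b) :: z).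
  have := @equiv_runs_cat u ((m, a) :: v) (I ++ (m, a) :: D) ((n, b) :: z).
  by rewrite -!catA; apply.
have /run_cat [C [H1 H2]] := run_equiv HE2 Hr.
exists (u ++ I), (((m, a) :: D) ++ (n, b) :: z), C; do 3!split=> //.
move/run_cat: H2 => [Cx [Hx /= [Cy [[He _ _] _]]]].
split; first by case: Hx => C2 [[Hm2 _ _] _].
move=> p pn; rewrite -(run_notin_dom Hx); first exact: He.
move=> y yD; apply: contraFN (disjointFr Hdis pn) => py.
exact: subsetP (HDT y yD) p py.
Qed.

Lemma enabling_cut_of_contains C0 w C' m n :
  m != n -> ~ m ~>+ n -> ~ n ~>+ m -> run N C0 w C' ->
  contains w m -> contains w n -> enabling_cut m n C0 w C'.
Proof.
move=> Hmn Hnomn Hnonm Hr /contains_split [u [a [r Ew]]]; subst w.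
rewrite /contains map_cat mem_cat map_cons in_cons [n == _]eq_sym (negbTE Hmn) orFb.
case/orP => [/contains_split [u1 [b [u2 Eu]]] | /contains_split [v [b [z Er]]]].
  subst u; rewrite -catA /= in Hr *.
  by apply: enabling_cutC; apply: enabling_cut_of_no_path.
by subst r; apply: enabling_cut_of_no_path.
Qed.

Lemma concurrent_run_contains m n :
  wf_negotiation N -> concurrent N m n ->
  exists w C', run N (C_init N) w C' /\ contains w m /\ contains w n.
Proof.
move=> Hwf [Hd [C0 [[w0 Hw0] [Hm Hn]]]].
have [_ _ _ Hout _] := Hwf.
have Hd' : [disjoint dom N n & dom N m] by rewrite disjoint_sym.
have [a ao] := set0Pn _ (Hout m (disjoint_dom_neq_fin Hwf Hd')).
have [b bo] := set0Pn _ (Hout n (disjoint_dom_neq_fin Hwf Hd)).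
have [C1 Hs1] := step_enabled Hm ao.
have Hn1 : enabled N C1 n.
  by move=> p pn; case: Hs1 => _ _ ->; rewrite (disjointFl Hd pn); apply: Hn.
have [C2 Hs2] := step_enabled Hn1 bo.
exists (w0 ++ [:: (m, a); (n, b)]), C2; split.
  by apply/run_cat; exists C0; split=> //=; exists C1; split=> //; exists C2.
by rewrite /contains map_cat !mem_cat !inE !eqxx !orbT.
Qed.

End Negotiation.

Theorem lemma6p2 (Proc Node Res : finType) (N : negotiation Proc Node Res)
  (Hwf : wf_negotiation N) (Hacyc : acyclic N) (Hdet : deterministic N)
  (Hsound : sound N) (m n : Node) (Hmn : m <> n) :
  concurrent N m n <->
  ((exists w C', run N (C_init N) w C' /\ contains w m /\ contains w n) /\
   (forall w C', run N (C_init N) w C' -> contains w m -> contains w n ->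
      exists w1 w2 C, equiv_runs N w (w1 ++ w2) /\
        run N (C_init N) w1 C /\ run N C w2 C' /\
        enabled N C m /\ enabled N C n)).
Proof.
have neq_mn : m != n by apply/eqP.
split=> [Hc | [[w [C' [Hw [Hm Hn]]]] Hcut]].
  have no_mn := concurrent_no_path Hwf Hacyc Hdet Hsound Hc.
  have no_nm := concurrent_no_path Hwf Hacyc Hdet Hsound (concurrent_sym Hc).
  split; first exact: concurrent_run_contains.
  by move=> w C'; apply: enabling_cut_of_contains.
have [w1 [w2 [C [_ [Hw1 [_ [HCm HCn]]]]]]] := Hcut w C' Hw Hm Hn.
have HC : reachable N C by exists w1.
split; first exact: enabled_reachable_disjoint Hdet HC HCm HCn neq_mn.
by exists C.
Qed.
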